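(* Let $\Omega$ be a finite set, let $\mathcal K$ be a finite nonempty set of gambles on $\Omega$, and let $\underline{P}_{\mathcal K}$ be a coherent lower prevision on $\mathcal K$. Let $\mathcal M=\{P: P(f)\ge\underline{P}_{\mathcal K}(f)\ \forall f\in\mathcal K\}$ be its credal set and $\underline{E}(h)=\min_{P\in\mathcal M}P(h)$ its natural extension. For $f\in\mathcal K$ let $\mathcal M_f=\{P\in\mathcal M: P(f)=\underline{E}(f)\}$ and let $\mathcal E_f$ be the set of extreme points of $\mathcal M_f$. Let $\underline{P}$ be any coherent lower prevision on the set of all gambles with $\underline{P}(f)=\underline{P}_{\mathcal K}(f)$ for all $f\in\mathcal K$ (an extension of $\underline{P}_{\mathcal K}$), and let $h$ be any gamble. Then: (i) $\underline{P}(h)\le\max_{P\in\mathcal M_f}P(h)$ for every $f\in\mathcal K$; (ii) $\underline{P}(h)\le\min_{f\in\mathcal K}\max_{P\in\mathcal M_f}P(h)$, and this inequality is tight: for every gamble $h$ there exists an extension $\underline{P}'$ of $\underline{P}_{\mathcal K}$ (a coherent lower prevision on all gambles agreeing with $\underline{P}_{\mathcal K}$ on $\mathcal K$) with $\underline{P}'(h)=\min_{f\in\mathcal K}\max_{P\in\mathcal M_f}P(h)$; (iii) $\underline{P}(h)\le\min_{f\in\mathcal K}\max_{E\in\mathcal E_f}E(h)$, and this inequality is also tight in the same sense.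
   Context: Gambles are real-valued functions on the finite set $\Omega$. A linear prevision is the expectation functional $P(f)=\sum_{x}p(x)f(x)$ of a probability mass vector $p$. A lower prevision $\underline{P}$ on a set of gambles $\mathcal H$ is coherent if there is a nonempty closed convex set $\mathcal C$ of linear previsions with $\underline{P}(f)=\min_{P\in\mathcal C}P(f)$ for all $f\in\mathcal H$. Since $\mathcal K$ is finite, $\mathcal M$ is a convex polytope and each $\mathcal M_f$ is a face of it with finitely many extreme points. *)

From HB Require Import structures.
From mathcomp Require Import all_boot all_order all_algebra.
From mathcomp Require Import all_classical all_reals all_analysis.
Set Implicit Arguments. Unset Strict Implicit. Unset Printing Implicit Defensive.
Import Order.TTheory GRing.Theory Num.Theory.
Import numFieldNormedType.Exports.
Local Open Scope classical_set_scope.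
Local Open Scope ring_scope.

Section Defs.
Variables (R : realType) (T : finType).

(* gambles are functions T -> R; a linear prevision is given by a pmf *)
Definition pmf (p : T -> R) : Prop :=
  (forall x, 0 <= p x) /\ \sum_(x : T) p x = 1.

Definition expect (p f : T -> R) : R := \sum_(x : T) p x * f x.

Definition convex_set (C : set (T -> R)) : Prop :=
  forall p q (t : R), C p -> C q -> 0 <= t <= 1 ->
    C (fun x => t * p x + (1 - t) * q x).

(* coherence on H: lp is the lower envelope (a min) over a nonempty closed
   convex set of linear previsions; closedness w.r.t. the pointwise
   (= Euclidean, T finite) topology *)
Definition coherent_on (H : set (T -> R)) (lp : (T -> R) -> R) : Prop :=
  exists C : set (T -> R),
    [/\ C !=set0, (forall p, C p -> pmf p), convex_set C,
        @closed {ptws T -> R} C &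
        forall f, H f ->
          (exists2 p, C p & expect p f = lp f) /\
          (forall p, C p -> lp f <= expect p f)].

Definition extension (K : set (T -> R)) (lpK lp : (T -> R) -> R) : Prop :=
  coherent_on setT lp /\ (forall f, K f -> lp f = lpK f).

Definition credal (K : set (T -> R)) (lpK : (T -> R) -> R) : set (T -> R) :=
  [set p | pmf p /\ forall f, K f -> lpK f <= expect p f].

Definition natext K lpK (h : T -> R) : R :=
  inf [set expect p h | p in credal K lpK].

Definition credal_face K lpK (f : T -> R) : set (T -> R) :=
  [set p | credal K lpK p /\ expect p f = natext K lpK f].

Definition extreme_point (S : set (T -> R)) (p : T -> R) : Prop :=
  S p /\ forall q r (t : R), S q -> S r -> 0 < t < 1 ->
    p = (fun x => t * q x + (1 - t) * r x) -> q = p /\ r = p.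

Definition face_extremes K lpK f : set (T -> R) :=
  [set p | extreme_point (credal_face K lpK f) p].

Definition maxover (S : set (T -> R)) (h : T -> R) : R :=
  sup [set expect p h | p in S].

Definition minmax_face K lpK (h : T -> R) : R :=
  inf [set maxover (credal_face K lpK f) h | f in K].

Definition minmax_extreme K lpK (h : T -> R) : R :=
  inf [set maxover (face_extremes K lpK f) h | f in K].

End Defs.

From Pilot Require Import Defs.
From HB Require Import structures.
From mathcomp Require Import all_boot all_order all_algebra.
From mathcomp Require Import all_classical all_reals all_analysis.
From mathcomp Require Import lra.
Set Implicit Arguments. Unset Strict Implicit. Unset Printing Implicit Defensive.
Import Order.TTheory GRing.Theory Num.Theory.
Import numFieldNormedType.Exports.
Local Open Scope classical_set_scope.
Local Open Scope ring_scope.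

(* An extension lp of lpK is the lower envelope of a closed convex set C of
   linear previsions; a P in C attaining lp(f) for f in K dominates lpK and
   attains lpK(f) = E(f), so it lies in the face M_f, whence
   lp(h) <= P(h) <= max_{M_f} P(h).  For tightness choose, for each f in K, a
   maximiser P_f of P(h) on the compact face M_f: the lower envelope of the
   finitely many P_f is coherent, equals lpK on K (every P_f lies in M and
   attains lpK(f) at f) and equals min_f P_f(h) at h.  The maximum of P(h) over
   a compact face is attained at an extreme point: maximise lexicographically,
   first P(h) and then every coordinate P(x); a lexicographic maximiser is not
   a proper convex combination of two points of the face. *)

Section RealBounds.
Variable R : realType.

Lemma sup_max (A : set R) x : A x -> ubound A x -> sup A = x.
Proof.
move=> Ax ubx; apply/eqP; rewrite eq_le ge_sup ?ub_le_sup //.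
  by exists x.
by exists x.
Qed.

Lemma inf_min (A : set R) x : A x -> lbound A x -> inf A = x.
Proof.
move=> Ax lbx; apply/eqP; rewrite eq_le lb_le_inf ?ge_inf //.
  by exists x.
by exists x.
Qed.

Lemma finite_set_min (A : set R) : finite_set A -> A !=set0 ->
  exists2 x, A x & lbound A x.
Proof.
move=> finA A0.
have := compact_EVT_min A0 (finite_compact finA)
  (@continuous_subspaceT _ _ A id (fun x => cvg_id)).
case=> x; rewrite inE => Ax xmin.
by exists x => // y Ay; apply: xmin; rewrite inE.
Qed.

End RealBounds.

Section Previsions.
Variables (R : realType) (T : finType).
Local Notation PT := {ptws T -> R}.
Implicit Types (p q r : T -> R) (g h : T -> R) (S : set (T -> R)).

Lemma expect_continuous g : continuous (fun p : PT => expect p g).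
Proof.
apply: (@continuous_big R T +%R 0 xpredT); first exact: add_continuous.
move=> x _ p; apply: continuousM; last exact: cst_continuous.
exact: (@proj_continuous T (fun _ => R) x).
Qed.

Lemma closed_expect_ge g c : closed ([set p | c <= expect p g] : set PT).
Proof.
apply: (@preimage_closed _ _ (fun p : PT => expect p g) [set x | c <= x]).
  by move=> p _; apply: expect_continuous.
exact: closed_ge.
Qed.

Lemma closed_expect_eq g c : closed ([set p | expect p g = c] : set PT).
Proof.
apply: (@preimage_closed _ _ (fun p : PT => expect p g) [set x | x = c]).
  by move=> p _; apply: expect_continuous.
exact: closed_eq.
Qed.

Lemma closed_pmf : closed (@Defs.pmf R T : set PT).
Proof.
have -> : (@Defs.pmf R T : set PT) =
    \bigcap_(x in [set: T]) [set p : PT | 0 <= p x] `&`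
    [set p : PT | \sum_x p x = 1].
  by apply/seteqP; split=> p [p0 p1]; split=> // x; [move=> _|]; apply: p0.
have proj_cont x : continuous (fun p : PT => p x).
  exact: (@proj_continuous T (fun _ => R) x).
apply: closedI.
  apply: closed_bigI => x _.
  apply: (@preimage_closed _ _ (fun p : PT => p x) [set y | 0 <= y]).
    by move=> p _; apply: proj_cont.
  exact: closed_ge.
apply: (@preimage_closed _ _ (fun p : PT => \sum_x p x) [set y | y = 1]).
  move=> p _; apply: (@continuous_big R T +%R 0 xpredT) => //.
  exact: add_continuous.
exact: closed_eq.
Qed.

Lemma compact_closed_pmf (S : set PT) :
  closed S -> S `<=` @Defs.pmf R T -> compact S.
Proof.
move=> clS Spmf.
apply: (@subclosed_compact _ _ [set p : PT | forall x, `[0, 1]%classic (p x)]);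
  rewrite //.
  exact: (@tychonoff T (fun _ => R) _ (fun _ => @segment_compact R 0 1)).
move=> p /Spmf[p0 p1] x /=; rewrite in_itv /= p0 -p1 (bigD1 x) //= lerDl.
by apply: sumr_ge0 => y _; apply: p0.
Qed.

Definition mix t p q : T -> R := fun x => t * p x + (1 - t) * q x.

Lemma expect_mix t p q g :
  expect (mix t p q) g = t * expect p g + (1 - t) * expect q g.
Proof.
rewrite /expect /mix !mulr_sumr -big_split /=; apply: eq_bigr => x _.
by rewrite mulrDl !mulrA.
Qed.

Lemma mixC t p q : mix t p q = mix (1 - t) q p.
Proof. by apply: funext => x; rewrite /mix subKr addrC. Qed.

Definition delta (x : T) : T -> R := fun y => (y == x)%:R.

Lemma expect_delta p x : expect p (delta x) = p x.
Proof.
rewrite /expect (bigD1 x) //= /delta eqxx mulr1 big1 ?addr0 // => y /negbTE->.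
by rewrite mulr0.
Qed.

Definition argmax_set S g : set (T -> R) :=
  [set p | S p /\ forall q, S q -> expect q g <= expect p g].

Lemma compact_argmax_set (S : set PT) g :
  compact S -> compact (argmax_set S g : set PT).
Proof.
move=> cS; have -> : argmax_set S g =
    S `&` \bigcap_(q in S) [set p : PT | expect q g <= expect p g].
  by apply/seteqP; split=> p [Sp pmax]; split=> // q; apply: pmax.
apply: compact_closedI => //.
by apply: closed_bigI => q _; apply: closed_expect_ge.
Qed.

Lemma argmax_set_nonempty (S : set PT) g : compact S -> S !=set0 ->
  argmax_set S g !=set0.
Proof.
move=> cS S0.
have [p Sp pmax] := compact_EVT_max S0 cS
  (continuous_subspaceT (@expect_continuous g)).
by exists p; split=> [|q Sq]; [rewrite -inE | apply: pmax; rewrite inE].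
Qed.

Lemma argmax_set_face S g p q r t : argmax_set S g p -> S q -> S r ->
  0 < t < 1 -> p = mix t q r -> argmax_set S g q /\ argmax_set S g r.
Proof.
move=> [Sp pmax] Sq Sr /andP[t0 t1] pE.
have := pmax q Sq; have := pmax r Sr.
rewrite pE expect_mix => rle qle.
have qE : expect q g = expect (mix t q r) g by rewrite expect_mix; nra.
have rE : expect r g = expect (mix t q r) g by rewrite expect_mix; nra.
by rewrite -pE in qE rE; split; split=> // s Ss; rewrite ?qE ?rE pmax.
Qed.

Lemma lex_argmax (gs : seq (T -> R)) (S : set PT) : compact S -> S !=set0 ->
  exists2 p, S p & forall q r t, S q -> S r -> 0 < t < 1 -> p = mix t q r ->
    forall g, g \in gs -> expect q g = expect p g.
Proof.
elim: gs S => [|g gs IH] S cS S0; first by case: S0 => p Sp; exists p.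
have [p [Sp pmax] pE] :=
  IH _ (compact_argmax_set (g:=g) cS) (argmax_set_nonempty g cS S0).
exists p => // q r t Sq Sr t01 pqr g'.
have [[_ qmax] ?] := argmax_set_face (conj Sp pmax) Sq Sr t01 pqr.
rewrite inE => /orP[/eqP->|g'gs].
  by apply/eqP; rewrite eq_le pmax ?qmax.
exact: (pE q r t).
Qed.

Lemma exists_extreme_argmax (S : set PT) h : compact S -> S !=set0 ->
  exists p, extreme_point S p /\ argmax_set S h p.
Proof.
move=> cS S0.
have [p [Sp pmax] pE] := lex_argmax [seq delta x | x <- enum T]
  (compact_argmax_set (g:=h) cS) (argmax_set_nonempty h cS S0).
exists p; split=> //; split=> // q r t Sq Sr t01 pqr.
have [Mq Mr] := argmax_set_face (conj Sp pmax) Sq Sr t01 pqr.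
have agree s u v : argmax_set S h s -> argmax_set S h u -> 0 < v < 1 ->
    p = mix v s u -> s = p.
  move=> Ms Mu v01 psu; apply: funext => x; rewrite -!expect_delta.
  apply: (pE s u v Ms Mu v01 psu).
  by rewrite map_f ?mem_enum.
split; first exact: agree Mq Mr t01 pqr.
apply: agree Mr Mq _ (etrans pqr (mixC t q r)).
by move: t01 => /andP[t0 t1]; rewrite subr_gt0 t1 ltrBlDr ltrDl t0.
Qed.

Lemma maxover_argmax S h p : argmax_set S h p -> maxover S h = expect p h.
Proof.
by case=> Sp pmax; apply: sup_max => [|_ [q Sq <-]]; [exists p | apply: pmax].
Qed.

Lemma le_maxover (S : set PT) h q :
  compact S -> S q -> expect q h <= maxover S h.
Proof.
move=> cS Sq; have [p Mp] := argmax_set_nonempty h cS (ex_intro _ q Sq).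
by rewrite (maxover_argmax Mp); apply: Mp.2.
Qed.

Lemma maxover_extreme_points (S : set PT) h : compact S -> S !=set0 ->
  maxover [set p | extreme_point S p] h = maxover S h.
Proof.
move=> cS S0; have [p [Ep [Sp pmax]]] := exists_extreme_argmax h cS S0.
rewrite (maxover_argmax (conj Sp pmax)); apply: maxover_argmax.
by split=> // q [Sq _]; apply: pmax.
Qed.

Definition lower_envelope S g := inf [set expect p g | p in S].

Lemma lower_envelope_attained S g : finite_set S -> S !=set0 ->
  exists2 p, S p & lower_envelope S g = expect p g.
Proof.
move=> finS [p0 Sp0].
have [_ [p Sp <-] pmin] :=
  finite_set_min (finite_image (fun p => expect p g) finS)
    (ex_intro _ _ (ex_intro2 _ _ p0 Sp0 erefl)).
by exists p => //; apply: inf_min => //; exists p.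
Qed.

Lemma lower_envelope_le S g q :
  finite_set S -> S q -> lower_envelope S g <= expect q g.
Proof.
move=> finS Sq.
have [m _ mlb] := finite_set_min (finite_image (fun p => expect p g) finS)
  (ex_intro _ _ (ex_intro2 _ _ q Sq erefl)).
by apply: ge_inf; [exists m | exists q].
Qed.

Lemma closed_credal (H : set (T -> R)) lp : closed (credal H lp : set PT).
Proof.
have -> : (credal H lp : set PT) =
    @Defs.pmf R T `&` \bigcap_(g in H) [set p : PT | lp g <= expect p g].
  by apply/seteqP; split=> p [pp plp]; split=> // g; apply: plp.
apply: closedI; first exact: closed_pmf.
by apply: closed_bigI => g _; apply: closed_expect_ge.
Qed.

Lemma convex_credal (H : set (T -> R)) lp : Defs.convex_set (credal H lp).
Proof.
move=> p q t [[p0 p1] plp] [[q0 q1] qlp] /andP[t0 t1]; split; first split.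
- by move=> x; have := p0 x; have := q0 x; nra.
- by rewrite big_split /= -!mulr_sumr p1 q1 !mulr1 subrKC.
- move=> g Hg; have := plp g Hg; have := qlp g Hg.
  by rewrite (_ : (fun x => _) = mix t p q) // expect_mix; nra.
Qed.

Lemma coherent_lower_envelope S :
  finite_set S -> S !=set0 -> S `<=` @Defs.pmf R T ->
  coherent_on setT (lower_envelope S).
Proof.
move=> finS S0 Spmf.
have S_credal : S `<=` credal setT (lower_envelope S).
  by move=> p Sp; split=> [|g _]; [apply: Spmf | apply: lower_envelope_le].
exists (credal setT (lower_envelope S)); split.
- by case: S0 => p /S_credal; exists p.
- by move=> p [].
- exact: convex_credal.
- exact: closed_credal.
- move=> g _; split; last by move=> p [_]; apply.
  have [p Sp ->] := lower_envelope_attained g finS S0.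
  by exists p => //; apply: S_credal.
Qed.

Section CredalFaces.
Variables (K : set (T -> R)) (lpK : (T -> R) -> R).

Lemma compact_credal_face f : compact (credal_face K lpK f : set PT).
Proof.
have -> : (credal_face K lpK f : set PT) =
    credal K lpK `&` [set p : PT | expect p f = natext K lpK f] by [].
apply: compact_closed_pmf; last by move=> p [[]].
by apply: closedI; [apply: closed_credal | apply: closed_expect_eq].
Qed.

Hypothesis cohK : coherent_on K lpK.

Lemma coherent_credal_attained f : K f ->
  exists2 p, credal K lpK p & expect p f = lpK f.
Proof.
case: cohK => C [_ Cpmf _ _ Clp] Kf; have [[p Cp pf] _] := Clp f Kf.
exists p => //; split=> [|g Kg]; [exact: Cpmf | exact: (Clp g Kg).2].
Qed.

Lemma natext_coherent f : K f -> natext K lpK f = lpK f.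
Proof.
move=> Kf; have [p Mp pf] := coherent_credal_attained Kf.
by apply: inf_min => [|_ [q [_ qlp] <-]]; [exists p | apply: qlp].
Qed.

Lemma credal_face_nonempty f : K f -> credal_face K lpK f !=set0.
Proof.
move=> Kf; have [p Mp pf] := coherent_credal_attained Kf.
by exists p; split; rewrite ?natext_coherent.
Qed.

Lemma minmax_extreme_face h : minmax_extreme K lpK h = minmax_face K lpK h.
Proof.
congr inf; apply: eq_imagel => f Kf; apply: maxover_extreme_points.
  exact: compact_credal_face.
exact: credal_face_nonempty.
Qed.

Lemma extension_le_maxover_face lp f h : extension K lpK lp -> K f ->
  lp h <= maxover (credal_face K lpK f) h.
Proof.
move=> [[C [_ Cpmf _ _ Clp]] lpE] Kf; have [[p Cp pf] _] := Clp f I.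
have Mp : credal_face K lpK f p.
  split; last by rewrite natext_coherent // -lpE.
  by split=> [|g Kg]; [apply: Cpmf | rewrite -lpE //; apply: (Clp g I).2].
exact: le_trans ((Clp h I).2 p Cp) (le_maxover h (@compact_credal_face f) Mp).
Qed.

Lemma extension_le_minmax_face lp h : K !=set0 -> extension K lpK lp ->
  lp h <= minmax_face K lpK h.
Proof.
move=> [f Kf] ext; apply: lb_le_inf.
  by exists (maxover (credal_face K lpK f) h), f.
by move=> _ [g Kg <-]; apply: extension_le_maxover_face.
Qed.

Lemma exists_extension_minmax_face h : finite_set K -> K !=set0 ->
  exists lp, extension K lpK lp /\ lp h = minmax_face K lpK h.
Proof.
move=> finK [f0 Kf0].
have /choice[pf Mpf] : forall f, exists p,
    K f -> argmax_set (credal_face K lpK f) h p.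
  move=> f; have [Kf|] := pselect (K f); last by exists (fun=> 0).
  have [p Mp] := argmax_set_nonempty h (@compact_credal_face f)
    (credal_face_nonempty Kf).
  by exists p.
have finP : finite_set (pf @` K) by apply: finite_image.
have credal_pf f : K f -> credal K lpK (pf f) by case/Mpf => [[]].
exists (lower_envelope (pf @` K)); split; first split.
- apply: coherent_lower_envelope => //; first by exists (pf f0), f0.
  by move=> _ [f Kf <-]; case: (credal_pf f Kf).
- move=> f Kf; apply/eqP; rewrite eq_le; apply/andP; split.
    have [[_ pff] _] := Mpf f Kf; rewrite -natext_coherent // -pff.
    by apply: lower_envelope_le => //; exists f.
  have [_ [g Kg <-] ->] := lower_envelope_attained f finP
    (ex_intro _ _ (ex_intro2 _ _ f0 Kf0 erefl)).
  by case: (credal_pf g Kg) => _; apply.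
- rewrite /lower_envelope image_comp; congr inf; apply: eq_imagel => f Kf /=.
  by rewrite (maxover_argmax (Mpf f Kf)).
Qed.

End CredalFaces.
End Previsions.

Theorem corollary5 (R : realType) (T : finType)
    (K : set (T -> R)) (lpK : (T -> R) -> R) :
  finite_set K -> K !=set0 -> coherent_on K lpK ->
  (forall (lp : (T -> R) -> R), extension K lpK lp -> forall h : T -> R,
     [/\ (forall f, K f -> lp h <= maxover (credal_face K lpK f) h),
         lp h <= minmax_face K lpK h &
         lp h <= minmax_extreme K lpK h])
  /\ (forall h : T -> R, exists lp' : (T -> R) -> R,
        extension K lpK lp' /\ lp' h = minmax_face K lpK h)
  /\ (forall h : T -> R, exists lp' : (T -> R) -> R,
        extension K lpK lp' /\ lp' h = minmax_extreme K lpK h).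
Proof.
move=> finK K0 cohK; split; last split.
- move=> lp ext h; rewrite (minmax_extreme_face cohK).
  have le_face := extension_le_minmax_face cohK h K0 ext.
  by split=> // f; apply: extension_le_maxover_face.
- by move=> h; apply: exists_extension_minmax_face.
- move=> h; rewrite (minmax_extreme_face cohK).
  exact: exists_extension_minmax_face.
Qed.
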